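(* Let $G\le\mathrm{Aut}(\mathcal{T}_d)$ be a $d$-persistent self-similar group. Whenever two triples $(T_-,\sigma(g_1,\dots,g_n),T_+)$ and $(T_-',\sigma'(g_1',\dots,g_{n'}'),T_+')$ (with all $g_i,g_j'\in G$) represent the same element of $V_d(G)$, we have $g_n=g'_{n'}$.
   Context: Let $X=\{1,\dots,d\}$ ($d\ge2$) with its usual order; $X^*$ is the vertex set of the rooted $d$-ary tree $\mathcal{T}_d$ (root the empty word, $u$ adjacent to $ux$), ordered lexicographically. Every $f\in\mathrm{Aut}(\mathcal{T}_d)$ has a wreath recursion $f=\rho(f)(f_1,\dots,f_d)$ with $\rho(f)\in S_d$ and $f_i$ determined by $f(iw)=\rho(f)(i)f_i(w)$; the states of $f$ form the smallest set containing $f$ and closed under $f\mapsto f_i$. $G$ is self-similar if it contains all states of its elements, and $d$-persistent if $g_d=g$ for every $g\in G$ with wreath recursion $g=\rho(g)(g_1,\dots,g_d)$. With $X^\omega$ the infinite words, a triple $(T_-,\sigma(g_1,\dots,g_n),T_+)$ consists of finite complete rooted subtrees $T_-,T_+$ (rooted: contain the root; complete: $ux\in T$ implies $uy\in T$ for all $y$) with $n$ leaves $u_1,\dots,u_n$ resp. $v_1,\dots,v_n$ in lexicographic order, $\sigma\in S_n$, $g_i\in G$; it represents the homeomorphism of $X^\omega$ with $v_iw\mapsto u_{\sigma(i)}g_i(w)$. $V_d(G)$ is the group of all homeomorphisms so represented. *)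

From mathcomp Require Import all_boot all_fingroup.
Set Implicit Arguments. Unset Strict Implicit. Unset Printing Implicit Defensive.

(* Alphabet X = {1,...,d} is modelled by 'I_d = {0,...,d-1} with the usual
   order; letter k+1 of the paper is the ordinal k.  The letter d is the
   ordinal of value d.-1. *)
Definition word (d : nat) := seq 'I_d.
Definition infword (d : nat) := nat -> 'I_d.

Definition adj d (u v : word d) : Prop :=
  exists x : 'I_d, v = rcons u x \/ u = rcons v x.

Definition is_aut d (f : word d -> word d) : Prop :=
  bijective f /\ f [::] = [::] /\ forall u v, adj u v <-> adj (f u) (f v).

(* Wreath recursion: f(i w) = rho(f)(i) f_i(w); the state f_i is: *)
Definition section d (f : word d -> word d) (i : 'I_d) : word d -> word d :=
  fun w => behead (f (i :: w)).

Definition is_aut_subgroup d (G : (word d -> word d) -> Prop) : Prop :=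
  (forall g, G g -> is_aut g) /\
  G id /\
  (forall g h, G g -> G h -> G (g \o h)) /\
  (forall g, G g -> exists h, G h /\ h \o g =1 id /\ g \o h =1 id).

Definition self_similar d (G : (word d -> word d) -> Prop) : Prop :=
  forall g, G g -> forall i : 'I_d, G (section g i).

Definition d_persistent d (G : (word d -> word d) -> Prop) : Prop :=
  forall g, G g -> forall x : 'I_d, val x = d.-1 -> section g x = g.

Definition act d (g : word d -> word d) (w : infword d) : infword d :=
  fun n => nth (w 0) (g (mkseq w n.+1)) n.

Definition cat_inf d (u : word d) (w : infword d) : infword d :=
  fun n => if n < size u then nth (w 0) u n else w (n - size u).

Fixpoint lexlt d (u v : word d) : bool :=
  match u, v with
  | [::], [::] => false
  | [::], _ :: _ => true
  | _ :: _, [::] => false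
  | x :: u', y :: v' => (x < y) || ((x == y) && lexlt u' v')
  end.

Definition is_cr_subtree d (T : seq (word d)) : Prop :=
  [::] \in T /\
  (forall u (x : 'I_d), rcons u x \in T -> u \in T) /\
  (forall u (x y : 'I_d), rcons u x \in T -> rcons u y \in T).

Definition leaves_lex d (T : seq (word d)) (ls : seq (word d)) : Prop :=
  sorted (@lexlt d) ls /\
  forall u, u \in ls <-> (u \in T /\ forall x : 'I_d, rcons u x \notin T).

(* (T_-, sigma(g_1,...,g_n), T_+) is a triple over G, where us = (u_1..u_n)
   are the leaves of T_- and vs = (v_1..v_n) those of T_+. *)
Definition is_triple d (G : (word d -> word d) -> Prop)
  (Tm Tp us vs : seq (word d)) (sigma : 'S_(size vs))
  (gs : seq (word d -> word d)) : Prop :=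
  is_cr_subtree Tm /\ is_cr_subtree Tp /\
  leaves_lex Tm us /\ leaves_lex Tp vs /\
  size us = size vs /\ size gs = size vs /\
  (forall i, i < size gs -> G (nth id gs i)).

Definition represents d (us vs : seq (word d)) (sigma : 'S_(size vs))
  (gs : seq (word d -> word d)) (F : infword d -> infword d) : Prop :=
  forall (i : 'I_(size vs)) (w : infword d),
    F (cat_inf (nth [::] vs i) w) =
    cat_inf (nth [::] us (sigma i)) (act (nth id gs i) w).

Arguments is_triple {d} G Tm Tp us vs sigma gs.
Arguments represents {d} us vs sigma gs F.

From Pilot Require Import Defs.
From mathcomp Require Import all_boot all_fingroup zify.
From Stdlib Require Import FunctionalExtensionality.
Set Implicit Arguments. Unset Strict Implicit. Unset Printing Implicit Defensive.

(* The leaves of a complete rooted subtree, listed lexicographically, end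
   with the rightmost leaf d^k, so the last entry of a triple records
   F(d^k w) = u g(w).  By d-persistence the state of g at d^j is g itself, so
   for k <= k' the two triples give u g(d^(k'-k)) g(w) = u' g'(w) for all w.
   As g is injective on letters and d >= 2, the first letter of g(w) is not
   constant in w; hence the two prefixes have the same length, g and g' agree on X^omega,
   and so g = g'. *)

Section InfiniteWords.

Variable d : nat.
Implicit Types (u v : word d) (z : infword d).

Lemma cat_inf_addn u z n : cat_inf u z (size u + n) = z n.
Proof. by rewrite /cat_inf ltnNge leq_addr addKn. Qed.

Lemma cat_inf_cat u v z : cat_inf u (cat_inf v z) = cat_inf (u ++ v) z.
Proof.
apply: functional_extensionality => n; rewrite /cat_inf size_cat nth_cat.
case: ltnP => [nu|un]; first by rewrite ltn_addr //; apply: set_nth_default.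
by rewrite -(subnKC un) ltn_add2l addKn subnDA addKn.
Qed.

Lemma mkseq_cat_inf_take u z m : m <= size u -> mkseq (cat_inf u z) m = take m u.
Proof.
move=> mu; apply: (@eq_from_nth _ (z 0)); first by rewrite size_mkseq size_takel.
move=> i; rewrite size_mkseq => im.
by rewrite nth_mkseq // nth_take // /cat_inf (leq_trans im mu).
Qed.

Lemma mkseq_cat_inf u z m : mkseq (cat_inf u z) (size u + m) = u ++ mkseq z m.
Proof.
apply: (@eq_from_nth _ (z 0)); first by rewrite size_mkseq size_cat size_mkseq.
move=> i; rewrite size_mkseq => im; rewrite nth_mkseq // nth_cat /cat_inf.
by case: ltnP => // ui; rewrite nth_mkseq // ltn_subLR.
Qed.

End InfiniteWords.

Section TreeAutomorphism.

Variables (d : nat) (g : word d -> word d).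
Hypothesis Ag : is_aut g.

Lemma aut_adj_rcons u x :
  exists y, g (rcons u x) = rcons (g u) y \/ g u = rcons (g (rcons u x)) y.
Proof.
have [y [E|E]] := (Ag.2.2 u (rcons u x)).1 (ex_intro _ x (or_introl erefl)).
- by exists y; left.
- by exists y; right.
Qed.

Lemma size_aut u : size (g u) = size u.
Proof.
have g_inj : injective g := bij_inj Ag.1.
elim: {u}(size u).+1 {-2}u (ltnSn (size u)) => // n IH.
case/lastP => [_|u x]; first by rewrite Ag.2.1.
rewrite size_rcons ltnS => un; have gu := IH u un.
have [y [->|E]] := aut_adj_rcons u x; first by rewrite !size_rcons gu.
case/lastP: u un gu E => [|u' x'] un gu E.
  by move: E; rewrite Ag.2.1 => /(congr1 size); rewrite size_rcons.
have gu' : size (g u') = size u' by apply: IH; rewrite size_rcons in un; lia.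
have [y' [E'|E']] := aut_adj_rcons u' x'.
- move: E; rewrite E' => /rcons_inj [] /g_inj /(congr1 size).
  rewrite !size_rcons; lia.
- by move: E' => /(congr1 size); rewrite gu' size_rcons gu size_rcons; lia.
Qed.

Lemma aut_rcons u x : exists y, g (rcons u x) = rcons (g u) y.
Proof.
have [y [E|E]] := aut_adj_rcons u x; first by exists y.
by move: E => /(congr1 size); rewrite size_rcons !size_aut size_rcons; lia.
Qed.

Lemma take_aut_cat u w : take (size u) (g (u ++ w)) = g u.
Proof.
elim/last_ind: w => [|w y IH]; first by rewrite cats0 -size_aut take_size.
rewrite -rcons_cat; have [z ->] := aut_rcons (u ++ w) y.
by rewrite -cats1 takel_cat ?IH // size_aut size_cat leq_addr.
Qed.

Definition wsection u : word d -> word d := fun w => drop (size u) (g (u ++ w)).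

Lemma act_cat_inf u z :
  Defs.act g (cat_inf u z) = cat_inf (g u) (Defs.act (wsection u) z).
Proof.
apply: functional_extensionality => n; rewrite {2}/cat_inf size_aut /Defs.act.
case: ltnP => [nu|un].
  have gtake : g (take n.+1 u) = take n.+1 (g u).
    by rewrite -{2}(cat_take_drop n.+1 u) -{2}(size_takel nu) take_aut_cat.
  rewrite mkseq_cat_inf_take // gtake nth_take //.
  by apply: set_nth_default; rewrite size_aut.
rewrite -(subnKC un) -addnS mkseq_cat_inf addKn.
rewrite -{1}(cat_take_drop (size u) (g (u ++ _))) take_aut_cat nth_cat size_aut.
rewrite ltnNge leq_addr addKn /wsection; apply: set_nth_default.
by rewrite size_drop size_aut size_cat size_mkseq; lia.
Qed.

Lemma wsection_nseq x j : section g x = g -> wsection (nseq j x) = g.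
Proof.
move=> gx; apply: functional_extensionality => w; rewrite /wsection size_nseq.
elim: j => [|j IH]; first by rewrite drop0.
have gxw : behead (g (x :: nseq j x ++ w)) = g (nseq j x ++ w).
  exact: (congr1 (fun f => f (nseq j x ++ w)) gx).
by rewrite /= -addn1 -drop_drop drop1 gxw.
Qed.

Lemma act_cat_inf_nseq x j z : section g x = g ->
  Defs.act g (cat_inf (nseq j x) z) = cat_inf (g (nseq j x)) (Defs.act g z).
Proof. by move=> gx; rewrite act_cat_inf wsection_nseq. Qed.

Lemma mkseq_act_cat_inf u z : mkseq (Defs.act g (cat_inf u z)) (size u) = g u.
Proof.
by rewrite act_cat_inf -{1}(size_aut u) mkseq_cat_inf_take // take_size.
Qed.

End TreeAutomorphism.

Section Rigidity.

Variable d : nat.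
Implicit Types (g : word d -> word d) (P Q : word d).

Lemma act_inj g g' : is_aut g -> is_aut g' ->
  (forall z, Defs.act g z = Defs.act g' z) -> g = g'.
Proof.
move=> Ag Ag' E; apply: functional_extensionality => -[|x w].
  by rewrite Ag.2.1 Ag'.2.1.
by rewrite -(mkseq_act_cat_inf Ag _ (fun _ => x)) E mkseq_act_cat_inf.
Qed.

Lemma cat_inf_act_size g g' P Q : 1 < d -> is_aut g ->
  (forall z, cat_inf P (Defs.act g z) = cat_inf Q (Defs.act g' z)) ->
  size Q <= size P.
Proof.
move=> d_gt1 Ag E; rewrite leqNgt; apply/negP => PQ.
pose x0 : 'I_d := Ordinal (ltnW d_gt1).
have g_letter (x : 'I_d) : g [:: x] = [:: nth x0 Q (size P)].
  have := congr1 (fun f => f (size P)) (E (fun _ => x)).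
  rewrite /cat_inf ltnn subnn PQ (set_nth_default x0) // /Defs.act /= => <-.
  by case: (g [:: x]) (size_aut Ag [:: x]) => [|y [|]].
have := g_letter x0.
by rewrite -(g_letter (Ordinal d_gt1)) => /(bij_inj Ag.1) [].
Qed.

Lemma cat_inf_act_cancel g g' P Q : 1 < d -> is_aut g -> is_aut g' ->
  (forall z, cat_inf P (Defs.act g z) = cat_inf Q (Defs.act g' z)) -> g = g'.
Proof.
move=> d_gt1 Ag Ag' E.
have PQ : size P = size Q.
  apply/eqP; rewrite eqn_leq (cat_inf_act_size d_gt1 Ag' (g' := g)).
    by rewrite (cat_inf_act_size d_gt1 Ag E).
  by move=> z; rewrite E.
apply: act_inj => // z; apply: functional_extensionality => n.
have := congr1 (fun f => f (size P + n)) (E z).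
by rewrite cat_inf_addn PQ cat_inf_addn.
Qed.

Lemma persistent_state_unique g g' (x : 'I_d) u u' k k' F :
  1 < d -> is_aut g -> is_aut g' -> section g x = g -> k <= k' ->
  (forall z, F (cat_inf (nseq k x) z) = cat_inf u (Defs.act g z)) ->
  (forall z, F (cat_inf (nseq k' x) z) = cat_inf u' (Defs.act g' z)) ->
  g = g'.
Proof.
move=> d_gt1 Ag Ag' gx kk E E'.
rewrite -(subnKC kk) in E'; move: (k' - k) E' => j E'.
apply: (@cat_inf_act_cancel _ _ (u ++ g (nseq j x)) u' d_gt1 Ag Ag') => z.
by rewrite -E' nseqD -!cat_inf_cat E act_cat_inf_nseq.
Qed.

End Rigidity.

Lemma lexlt_nseq_max d (x : 'I_d) k v : val x = d.-1 ->
  lexlt (nseq k x) v -> exists y w, v = rcons (nseq k x) y ++ w.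
Proof.
move=> xE; elim: k v => [|k IH] [|y v] //=; first by exists y, v.
case/orP => [|/andP [/eqP <- /IH [z [w ->]]]]; last by exists z, w.
by rewrite ltnNge xE -ltnS prednK ?ltn_ord // (leq_ltn_trans _ (ltn_ord y)).
Qed.

Section CompleteSubtree.

Variables (d : nat) (T : seq (word d)).
Hypothesis HT : is_cr_subtree T.

Lemma cr_subtree_prefix u w : u ++ w \in T -> u \in T.
Proof.
elim/last_ind: w => [|w y IH]; first by rewrite cats0.
by rewrite -rcons_cat => /HT.2.1.
Qed.

Lemma cr_subtree_nseq_leaf (x : 'I_d) :
  exists2 k, nseq k x \in T & forall y, rcons (nseq k x) y \notin T.
Proof.
have exT : exists k, nseq k x \in T by exists 0; exact: HT.1.
have boundT k : nseq k x \in T -> k <= \max_(u <- T) size u.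
  by move=> kT; rewrite -{1}(size_nseq k x) (leq_bigmax_seq (F := size) _ kT).
have [k kT kmax] := ex_maxnP exT boundT.
exists k => // y; apply/negP => /(HT.2.2 _ _ x).
by rewrite -cats1 -[[:: x]]/(nseq 1 x) -nseqD addn1 => /kmax; rewrite ltnn.
Qed.

Lemma leaves_lex_last (x : 'I_d) ls k : val x = d.-1 -> leaves_lex T ls ->
  nseq k x \in ls -> last [::] ls = nseq k x.
Proof.
move=> xE [ls_sorted ls_leaves] kls.
have [_ kleaf] := (ls_leaves _).1 kls.
set i := index (nseq k x) ls.
have ils : i < size ls by rewrite index_mem.
suff no_next : ~ i.+1 < size ls.
  by rewrite -nth_last (_ : (size ls).-1 = i) ?nth_index //; lia.
move=> next.
have := sortedP [::] ls_sorted i next; rewrite nth_index //.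
case/(lexlt_nseq_max xE) => y [w next_eq].
have := (ls_leaves _).1 (mem_nth [::] next); rewrite next_eq => -[+ _].
by move/cr_subtree_prefix; apply/negP; exact: kleaf.
Qed.

Lemma leaves_lex_last_nseq (x : 'I_d) ls : val x = d.-1 -> leaves_lex T ls ->
  exists2 k, nseq k x \in ls & last [::] ls = nseq k x.
Proof.
move=> xE Hls; have [k kT kleaf] := cr_subtree_nseq_leaf x.
have kls : nseq k x \in ls by apply/Hls.2; split.
by exists k => //; apply: leaves_lex_last.
Qed.

End CompleteSubtree.

Lemma triple_rightmost d G Tm Tp us vs sigma gs F (x : 'I_d) :
  val x = d.-1 -> is_triple G Tm Tp us vs sigma gs -> represents us vs sigma gs F ->
  exists k u, G (last id gs) /\
    forall z, F (cat_inf (nseq k x) z) = cat_inf u (Defs.act (last id gs) z).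
Proof.
move=> xE [_ [HTp [_ [Hvs [_ [gsE Ggs]]]]]] R.
have [k kvs lastvs] := leaves_lex_last_nseq HTp xE Hvs.
have i_lt : (size vs).-1 < size vs by rewrite ltn_predL; case: (vs) kvs.
have lastgs : nth id gs (size vs).-1 = last id gs by rewrite -gsE nth_last.
exists k, (nth [::] us (sigma (Ordinal i_lt))); split.
  by rewrite -lastgs; apply: Ggs; rewrite gsE.
by move=> z; have := R (Ordinal i_lt) z; rewrite /= nth_last lastvs lastgs.
Qed.

Theorem lemma5p4 (d : nat) (hd : 2 <= d)
  (G : (word d -> word d) -> Prop)
  (HG : is_aut_subgroup G) (Hss : self_similar G) (Hpers : d_persistent G)
  (Tm Tp us vs : seq (word d)) (sigma : 'S_(size vs))
  (gs : seq (word d -> word d))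
  (Tm' Tp' us' vs' : seq (word d)) (sigma' : 'S_(size vs'))
  (gs' : seq (word d -> word d))
  (H1 : is_triple G Tm Tp us vs sigma gs)
  (H2 : is_triple G Tm' Tp' us' vs' sigma' gs')
  (F : infword d -> infword d)
  (R1 : represents us vs sigma gs F)
  (R2 : represents us' vs' sigma' gs' F) :
  last id gs = last id gs'.
Proof.
have x_lt : d.-1 < d by rewrite ltn_predL ltnW.
pose x : 'I_d := Ordinal x_lt.
have xE : val x = d.-1 by [].
have [k [u [Gg E]]] := triple_rightmost xE H1 R1.
have [k' [u' [Gg' E']]] := triple_rightmost xE H2 R2.
have [Ag Ag'] := (HG.1 _ Gg, HG.1 _ Gg').
case: (leqP k k') => kk.
  exact: (persistent_state_unique hd Ag Ag' (Hpers _ Gg x xE) kk E E').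
apply/esym.
exact: (persistent_state_unique hd Ag' Ag (Hpers _ Gg' x xE) (ltnW kk) E' E).
Qed.
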